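(* Let $\lambda_1,\ldots,\lambda_k$ be integers, let $n_1,\ldots,n_k$ be positive integers and let $a_1,\ldots,a_k$ be integers with $0\leqslant a_s<n_s$ for each $s$. Let $p$ be a prime with $p>|S(n_1,\ldots,n_k)|$ and let $\zeta_p$ be any primitive $p$th root of unity. Then $$\sum_{\substack{1\leqslant s\leqslant k\\ x\equiv a_s \pmod{n_s}}}\lambda_s=0\quad\text{for all }x\in\mathbb Z$$ if and only if $$\sum_{s=1}^k\lambda_s\frac{\zeta_p^{a_s}}{1-\zeta_p^{n_s}}=0.$$
   Context: For positive integers $n_1,\ldots,n_k$, $S(n_1,\ldots,n_k)=\{r/n_s: r=0,\ldots,n_s-1;\ s=1,\ldots,k\}$, a set of rational numbers, and $|S(\cdot)|$ denotes its cardinality. *)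

From mathcomp Require Import all_boot all_order all_algebra all_field.
Set Implicit Arguments. Unset Strict Implicit. Unset Printing Implicit Defensive.
Import Order.TTheory GRing.Theory Num.Theory.

(* S(n_1,...,n_k) = { r/n_s : 0 <= r < n_s, 1 <= s <= k } as a duplicate-free
   list of rationals; its cardinality is the size of this list. *)
Definition Sset (k : nat) (n : 'I_k -> nat) : seq rat :=
  undup (flatten [seq [seq ((r%:R : rat) / (n s)%:R)%R | r <- iota 0 (n s)] | s <- enum 'I_k]).

Definition card_S (k : nat) (n : 'I_k -> nat) : nat := size (Sset n).

From mathcomp Require Import all_boot all_order all_algebra all_field.
Import Order.TTheory GRing.Theory Num.Theory.
From mathcomp Require Import ring.
Set Implicit Arguments. Unset Strict Implicit. Unset Printing Implicit Defensive.
Local Open Scope ring_scope.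

(* Let N = n_1 ... n_k and w(x) = sum of the lambda_s over the s with
   x = a_s (mod n_s); w is N-periodic, and its generating polynomial
   P(z) = sum_(x < N) w(x) z^x equals (1 - z^N) R(z), where
   R(z) = sum_s lambda_s z^(a_s) / (1 - z^(n_s)).  Since p > n_s, zeta^N <> 1,
   so w = 0 forces R(zeta) = 0.  Conversely P has integer coefficients, so if
   R(zeta) = 0 then R vanishes at all p - 1 primitive p-th roots of unity.
   For a primitive N-th root omega, D(z) = prod_(q in S) (z - omega^(qN)) is a
   common multiple of the z^(n_s) - 1 of degree |S| < p, and D R is a
   polynomial of degree < |S| with p - 1 >= |S| roots, hence zero.  So R
   vanishes away from the N-th roots of unity, P vanishes at every integer
   >= 2, and w = 0. *)

Lemma sum_expr_mod (R : comNzRingType) (z : R) (m n a : nat) : (a < n)%N ->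
  \sum_(x < m * n | (x %% n == a)%N) z ^+ x = z ^+ a * \sum_(j < m) (z ^+ n) ^+ j.
Proof.
move=> a_lt_n; elim: m => [|m IHm]; first by rewrite mul0n !big_ord0 mulr0.
rewrite big_ord_recr /= mulrDr -IHm -exprM -exprD.
rewrite -(big_mkord (fun x => (x %% n == a)%N)) mulSn addnC.
rewrite (@big_cat_nat _ _ _ (m * n)) ?leq_addr //= big_mkord; congr (_ + _).
rewrite -{1}(add0n (m * n)%N) big_addn addKn big_mkord.
rewrite (bigD1 (Ordinal a_lt_n)) /=; last by rewrite addnC modnMDl modn_small.
rewrite big1 ?addr0; first by rewrite mulnC.
move=> i /andP[]; rewrite addnC modnMDl modn_small // => /eqP ia /eqP[].
exact: val_inj.
Qed.

Lemma sub1r_mul_sum_expr_mod (R : comNzRingType) (z : R) (m n a : nat) : (a < n)%N ->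
  (1 - z ^+ n) * \sum_(x < m * n | (x %% n == a)%N) z ^+ x = z ^+ a * (1 - z ^+ (m * n)).
Proof.
move=> a_lt_n; rewrite sum_expr_mod // mulrCA; congr (_ * _).
rewrite mulnC exprM -[1 - _]opprB -[1 - (_ ^+ m)]opprB mulNr.
by rewrite (subrX1 (z ^+ n) m).
Qed.

Definition frac_sum (F : fieldType) (k : nat) (lam : 'I_k -> F) (n a : 'I_k -> nat)
    (z : F) : F :=
  \sum_(s < k) lam s * z ^+ a s / (1 - z ^+ n s).

Definition residue_weight (V : nmodType) (k : nat) (lam : 'I_k -> V) (n a : 'I_k -> nat)
    (x : nat) : V :=
  \sum_(s < k | (x %% n s == a s)%N) lam s.

Definition residue_poly (R : nzRingType) (k : nat) (lam : 'I_k -> R) (n a : 'I_k -> nat)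
    (N : nat) : {poly R} :=
  \poly_(x < N) residue_weight lam n a x.

Lemma horner_residue_poly (F : fieldType) (k : nat) (lam : 'I_k -> F) (n a : 'I_k -> nat)
    (N : nat) (y : F) :
  (forall s, a s < n s)%N -> (forall s, n s %| N)%N -> (forall s, y ^+ n s != 1) ->
  (residue_poly lam n a N).[y] = (1 - y ^+ N) * frac_sum lam n a y.
Proof.
move=> a_lt_n n_dvd_N y_nonpole; rewrite horner_poly /frac_sum mulr_sumr.
transitivity (\sum_(s < k) lam s * \sum_(x < N | (x %% n s == a s)%N) y ^+ x).
  under eq_bigr => x _ do rewrite /residue_weight mulr_suml big_mkcond.
  rewrite exchange_big /=; apply: eq_bigr => s _; rewrite mulr_sumr [RHS]big_mkcond.
  by apply: eq_bigr => x _; case: ifP; rewrite ?mul0r ?mulr0.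
apply: eq_bigr => s _.
have denom_neq0 : 1 - y ^+ n s != 0 by rewrite subr_eq0 eq_sym.
have := sub1r_mul_sum_expr_mod y (N %/ n s) (a_lt_n s); rewrite divnK // => geom.
rewrite -[X in lam s * X](mulKf denom_neq0) geom.
by move: (lam s) (y ^+ a s) (y ^+ N) (y ^+ n s) denom_neq0 => l ya yN yn ?; field.
Qed.

Lemma Xn_sub1_dvdp_prod_XsubC (F : fieldType) (N n : nat) (w : F) (L : seq nat) :
  N.-primitive_root w -> (n %| N)%N -> (forall r, r < n -> r * (N %/ n) \in L)%N ->
  ('X^n - 1) %| \prod_(x <- [seq w ^+ e | e <- L]) ('X - x%:P).
Proof.
move=> w_prim n_dvd_N L_exps; have w_n := dvdn_prim_root w_prim n_dvd_N.
rewrite -(factor_Xn_sub_1 w_n) /index_iota subn0.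
rewrite -(big_map (fun i => w ^+ (N %/ n) ^+ i) xpredT (fun x => 'X - x%:P)).
apply: uniq_roots_dvdp.
  apply/allP => x /mapP[i]; rewrite mem_iota add0n => /andP[_ i_lt_n] ->.
  by rewrite root_prod_XsubC -exprM mulnC map_f ?L_exps.
rewrite uniq_rootsE map_inj_in_uniq ?iota_uniq // => i j.
rewrite !mem_iota !add0n => /andP[_ i_lt_n] /andP[_ j_lt_n] /eqP.
by rewrite (eq_prim_root_expr w_n) !modn_small // => /eqP.
Qed.

Lemma frac_sum_clear_denoms (F : fieldType) (k : nat) (lam : 'I_k -> F)
    (n a : 'I_k -> nat) (D : {poly F}) :
  (forall s, a s < n s)%N -> D != 0 -> (forall s, ('X^(n s) - 1) %| D) ->
  exists2 T : {poly F}, (size T < size D)%N &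
    forall z, (forall s, z ^+ n s != 1) -> T.[z] = D.[z] * frac_sum lam n a z.
Proof.
move=> a_lt_n D_neq0 dvdD; pose Q s := D %/ ('X^(n s) - 1).
have QD s : Q s * ('X^(n s) - 1) = D by rewrite divpK.
exists (- \sum_(s < k) lam s *: ('X^(a s) * Q s)).
  have size_D_gt0 : (0 < size D)%N by rewrite lt0n size_poly_eq0.
  rewrite size_polyN; apply: (big_ind (fun q : {poly F} => size q < size D)%N) => //.
    by rewrite size_poly0.
    by move=> q r q_small r_small; rewrite (leq_ltn_trans (size_polyD _ _)) // gtn_max q_small.
  move=> s _; apply: leq_ltn_trans (size_scale_leq _ _) _.
  have [->|Q_neq0] := eqVneq (Q s) 0; first by rewrite mulr0 size_poly0.
  have n_gt0 : (0 < n s)%N := leq_ltn_trans (leq0n _) (a_lt_n s).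
  rewrite mulrC size_mulXn // -(QD s) size_mul ?size_XnsubC //.
    by rewrite addnS /= addnC ltn_add2l.
  by rewrite -size_poly_eq0 size_XnsubC.
move=> z z_nonpole; rewrite hornerN horner_sum /frac_sum mulr_sumr -sumrN.
apply: eq_bigr => s _; rewrite -(QD s) hornerZ !hornerM hornerXn hornerD hornerN.
rewrite hornerXn hornerC.
have denom_neq0 : 1 - z ^+ n s != 0 by rewrite subr_eq0 eq_sym.
by move: (Q s).[z] (lam s) (z ^+ a s) (z ^+ n s) denom_neq0 => q l za zn ?; field.
Qed.

Lemma expr_neq1_dvdn (R : nzRingType) (z : R) (m N : nat) :
  (m %| N)%N -> z ^+ N != 1 -> z ^+ m != 1.
Proof. by move=> /dvdnP[q ->]; apply: contra => /eqP zm; rewrite mulnC exprM zm expr1n. Qed.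

Lemma frac_sum_eq0_of_roots (F : fieldType) (k : nat) (lam : 'I_k -> F)
    (n a : 'I_k -> nat) (N : nat) (w : F) (L : seq nat) (rs : seq F) :
  (forall s, a s < n s)%N -> (forall s, n s %| N)%N -> N.-primitive_root w ->
  (forall s r, r < n s -> r * (N %/ n s) \in L)%N ->
  uniq rs -> (size L <= size rs)%N ->
  (forall z, z \in rs -> z ^+ N != 1 /\ frac_sum lam n a z = 0) ->
  forall z, z ^+ N != 1 -> frac_sum lam n a z = 0.
Proof.
move=> a_lt_n n_dvd_N w_prim L_exps rs_uniq size_L rs_roots z zN.
have nonpole (y : F) s : y ^+ N != 1 -> y ^+ n s != 1 by exact: expr_neq1_dvdn (n_dvd_N s).
pose D := \prod_(x <- [seq w ^+ e | e <- L]) ('X - x%:P).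
have D_neq0 : D != 0 by rewrite monic_neq0 ?monic_prod_XsubC.
have dvdD s := Xn_sub1_dvdp_prod_XsubC w_prim (n_dvd_N s) (L_exps s).
have [T size_T T_eval] := frac_sum_clear_denoms lam a_lt_n D_neq0 dvdD.
have T_eq0 : T = 0.
  apply: contraTeq size_T => T_neq0; rewrite -leqNgt size_prod_XsubC size_map.
  apply: leq_trans (max_poly_roots T_neq0 _ rs_uniq); first by rewrite ltnS.
  apply/allP => x /rs_roots[xN fx0].
  by rewrite /root T_eval => [|s]; rewrite ?fx0 ?mulr0 ?nonpole.
have Dz_neq0 : D.[z] != 0.
  rewrite -rootE root_prod_XsubC; apply: contra zN => /mapP[e _ ->].
  by rewrite -exprM mulnC exprM (prim_expr_order w_prim) expr1n.
have := T_eval z (fun s => nonpole z s zN); rewrite T_eq0 horner0 => /esym/eqP.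
by rewrite mulf_eq0 (negbTE Dz_neq0) => /eqP.
Qed.

Lemma root_residue_poly (F : fieldType) (k : nat) (lam : 'I_k -> F)
    (n a : 'I_k -> nat) (N : nat) (z : F) :
  (forall s, a s < n s)%N -> (forall s, n s %| N)%N -> z ^+ N != 1 ->
  root (residue_poly lam n a N) z = (frac_sum lam n a z == 0).
Proof.
move=> a_lt_n n_dvd_N zN; rewrite rootE horner_residue_poly // => [|s].
  by rewrite mulf_eq0 subr_eq0 eq_sym (negbTE zN).
exact: expr_neq1_dvdn zN.
Qed.

Lemma map_residue_poly (R : nzRingType) (k : nat) (lambda : 'I_k -> int)
    (n a : 'I_k -> nat) (N : nat) :
  map_poly intr (residue_poly lambda n a N)
    = residue_poly (fun s => (lambda s)%:~R : R) n a N.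
Proof.
by apply/polyP => i; rewrite coef_map !coef_poly; case: ifP; rewrite ?raddf_sum ?raddf0.
Qed.

Lemma root_map_intr_prim_root (P : {poly int}) (m : nat) (z1 z2 : algC) :
  m.-primitive_root z1 -> m.-primitive_root z2 ->
  root (map_poly intr P) z1 -> root (map_poly intr P) z2.
Proof.
move=> z1_prim z2_prim; have [P1 [P1_min _] min_dvd] := minCpolyP z1.
have -> : map_poly intr P = map_poly ratr (map_poly intr P : {poly rat}) :> {poly algC}.
  by rewrite -map_poly_comp; apply: eq_map_poly => b /=; rewrite rmorph_int.
rewrite min_dvd => P1_dvd; apply: (@root_dvdp _ (minCpoly z1)).
  by rewrite P1_min dvdp_map.
by rewrite (minCpoly_cyclotomic z1_prim) root_cyclotomic.
Qed.

Lemma frac_sum_conj_prim_root (k : nat) (lambda : 'I_k -> int) (n a : 'I_k -> nat)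
    (N p : nat) (z1 z2 : algC) :
  (forall s, a s < n s)%N -> (forall s, n s %| N)%N ->
  z1 ^+ N != 1 -> z2 ^+ N != 1 -> p.-primitive_root z1 -> p.-primitive_root z2 ->
  frac_sum (fun s => (lambda s)%:~R) n a z1 = 0 ->
  frac_sum (fun s => (lambda s)%:~R) n a z2 = 0.
Proof.
set lam := fun s => _; move=> a_lt_n n_dvd_N z1N z2N z1_prim z2_prim /eqP.
rewrite -(root_residue_poly lam a_lt_n n_dvd_N z1N) -map_residue_poly.
move/(root_map_intr_prim_root z1_prim z2_prim).
by rewrite map_residue_poly root_residue_poly // => /eqP.
Qed.

Lemma prime_prim_roots (R : nzRingType) (p : nat) (zeta : R) :
  prime p -> p.-primitive_root zeta ->
  {rs : seq R | [/\ uniq rs, size rs = p.-1 & forall z, z \in rs -> p.-primitive_root z]}.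
Proof.
move=> p_prime zeta_prim; have p_gt0 := prime_gt0 p_prime.
have iota_p : (1 + p.-1)%N = p by rewrite add1n prednK.
exists [seq zeta ^+ j | j <- iota 1 p.-1]; split.
- rewrite map_inj_in_uniq ?iota_uniq // => i j.
  rewrite !mem_iota iota_p => /andP[i_gt0 i_lt_p] /andP[j_gt0 j_lt_p] /eqP.
  by rewrite (eq_prim_root_expr zeta_prim) !modn_small // => /eqP.
- by rewrite size_map size_iota.
- move=> z /mapP[j]; rewrite mem_iota iota_p => /andP[j_gt0 j_lt_p] ->.
  by rewrite (prim_root_exp_coprime _ zeta_prim) coprime_sym prime_coprime // gtnNdvd.
Qed.

Lemma poly_eq0_nat_roots (R : numDomainType) (q : {poly R}) (m : nat) :
  (forall i, (m <= i)%N -> root q i%:R) -> q = 0.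
Proof.
move=> q_roots; apply/eqP; apply: contraT => q_neq0.
have := @max_poly_roots _ q [seq (m + i)%:R | i <- iota 0 (size q)] q_neq0.
rewrite size_map size_iota ltnn; apply.
  by apply/allP => x /mapP[i _ ->]; rewrite q_roots ?leq_addr.
by rewrite map_inj_uniq ?iota_uniq // => i j /eqP; rewrite eqr_nat eqn_add2l => /eqP.
Qed.

Lemma mem_Sset (k : nat) (n : 'I_k -> nat) (s : 'I_k) (r : nat) :
  (r < n s)%N -> (r%:R / (n s)%:R : rat) \in Sset n.
Proof.
move=> r_lt_n; rewrite mem_undup; apply/flatten_mapP; exists s; first by rewrite mem_enum.
by apply/mapP; exists r; rewrite ?mem_iota.
Qed.

Lemma n_le_card_S (k : nat) (n : 'I_k -> nat) (s : 'I_k) : (n s <= card_S n)%N.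
Proof.
have [-> // | n_gt0] := posnP (n s).
have n_neq0 : (n s)%:R != 0 :> rat by rewrite pnatr_eq0 -lt0n.
rewrite -[X in (X <= _)%N](size_iota 0) -(size_map (fun r => r%:R / (n s)%:R : rat)).
apply: uniq_leq_size => [|q /mapP[r]]; last by rewrite mem_iota => /andP[_ /mem_Sset] ? ->.
rewrite map_inj_in_uniq ?iota_uniq // => i j _ _ /eqP.
by rewrite (can_eq (divfK n_neq0)) eqr_nat => /eqP.
Qed.

(* For [q = r / n_s] with [n_s] dividing [N], [q * N] is the natural number
   [r * (N / n_s)]: these are the exponents of [omega] in [D] above. *)
Definition S_exponents (k : nat) (n : 'I_k -> nat) (N : nat) : seq nat :=
  [seq `|numq (q * N%:R)|%N | q <- Sset n].

Lemma mem_S_exponents (k : nat) (n : 'I_k -> nat) (N : nat) (s : 'I_k) (r : nat) :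
  (n s %| N)%N -> (r < n s)%N -> (r * (N %/ n s))%N \in S_exponents n N.
Proof.
move=> n_dvd_N r_lt_n; apply/mapP; exists (r%:R / (n s)%:R); first exact: mem_Sset.
have n_neq0 : (n s)%:R != 0 :> rat by rewrite pnatr_eq0 -lt0n (leq_ltn_trans _ r_lt_n).
have -> : (r%:R / (n s)%:R * N%:R : rat) = (r * (N %/ n s))%N%:R.
  by rewrite -{1}(divnK n_dvd_N) !natrM mulrCA divfK // mulrC.
by rewrite (numq_int (r * (N %/ n s))%N).
Qed.

Lemma eqz_mod_modz (x : int) (N n a : nat) : (0 < N)%N -> (n %| N)%N -> (a < n)%N ->
  (x == a%:Z %[mod n%:Z])%Z = (`|(x %% N%:Z)%Z|%N %% n == a)%N.
Proof.
move=> N_gt0 n_dvd_N a_lt_n; set y := `|(x %% N%:Z)%Z|%N.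
have x_modN : (x %% N%:Z)%Z = y by rewrite gez0_abs // modz_ge0 // eqz_nat -lt0n.
rewrite eqz_mod_dvd.
have -> : x - a%:Z = (x %/ N%:Z)%Z * N%:Z + (y%:Z - a%:Z).
  by rewrite {1}(divz_eq x N) x_modN addrA.
rewrite rpredDl; last by apply: dvdz_mull; rewrite dvdzE.
by rewrite -eqz_mod_dvd !modz_nat (modn_small a_lt_n).
Qed.

Lemma residue_poly_eq0_iff (R : numDomainType) (k : nat) (lambda : 'I_k -> int)
    (n a : 'I_k -> nat) (N : nat) :
  (0 < N)%N -> (forall s, n s %| N)%N -> (forall s, a s < n s)%N ->
  (forall x : int, \sum_(s < k | (x == (a s)%:Z %[mod (n s)%:Z])%Z) lambda s = 0)
  <-> residue_poly (fun s => (lambda s)%:~R : R) n a N = 0.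
Proof.
move=> N_gt0 n_dvd_N a_lt_n; rewrite -map_residue_poly.
have weight_modN x : \sum_(s < k | (x == (a s)%:Z %[mod (n s)%:Z])%Z) lambda s
    = residue_weight lambda n a `|(x %% N%:Z)%Z|%N.
  by apply: eq_bigl => s; rewrite (eqz_mod_modz _ N_gt0).
split=> [weight0 | P0 x].
  apply/polyP => i; rewrite coef_map coef_poly coef0; case: ltnP => // i_lt_N.
  by have := weight_modN i; rewrite weight0 modz_nat modn_small //= => <-.
rewrite weight_modN; set y := `|(x %% N%:Z)%Z|%N.
have y_lt_N : (y < N)%N.
  by rewrite -ltz_nat gez0_abs ?ltz_pmod ?modz_ge0 // eqz_nat -lt0n.
apply/eqP; rewrite -(intr_eq0 R).
have := congr1 (fun q : {poly R} => q`_y) P0.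
by rewrite /= coef_map coef_poly y_lt_N coef0 => ->.
Qed.

Theorem theorem1p2 (k : nat) (lambda : 'I_k -> int) (n : 'I_k -> nat)
    (a : 'I_k -> nat) (p : nat) (zeta : algC) :
  (forall s, 0 < n s)%N ->
  (forall s, a s < n s)%N ->
  prime p -> (card_S n < p)%N ->
  (p.-primitive_root zeta)%R ->
  (forall x : int,
      (\sum_(s < k | (x == (a s)%:Z %[mod (n s)%:Z])%Z) (lambda s : int))%R = 0%R)
  <->
  (\sum_(s < k) (lambda s)%:~R * zeta ^+ a s / (1 - zeta ^+ n s) = 0 :> algC)%R.
Proof.
move=> n_gt0 a_lt_n p_prime card_S_lt_p zeta_prim.
pose N := (\prod_(s < k) n s)%N; pose lam s : algC := (lambda s)%:~R.
have N_gt0 : (0 < N)%N by apply: prodn_gt0 => s; apply: n_gt0.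
have n_dvd_N s : (n s %| N)%N by rewrite /N (bigD1 s) //= dvdn_mulr.
have p_ndvd_N : ~~ (p %| N)%N.
  rewrite Euclid_dvd_prod // big_has; apply/hasPn => s _.
  by rewrite gtnNdvd // (leq_ltn_trans (n_le_card_S n s)).
have prim_expN_neq1 (z : algC) : p.-primitive_root z -> z ^+ N != 1.
  by move=> z_prim; rewrite -(prim_order_dvd z_prim).
rewrite (residue_poly_eq0_iff algC lambda N_gt0 n_dvd_N a_lt_n) -/(frac_sum lam n a zeta).
split=> [P0 | frac0].
  by apply/eqP; rewrite -(root_residue_poly lam a_lt_n n_dvd_N) ?prim_expN_neq1 // P0 root0.
apply: (poly_eq0_nat_roots (m := 2)) => i i_ge2.
have iN_neq1 : (i%:R : algC) ^+ N != 1 by rewrite gt_eqF // expr_gt1 // ltr1n.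
rewrite root_residue_poly //; apply/eqP.
have [w w_prim] := C_prim_root_exists N_gt0.
have [rs [rs_uniq size_rs rs_prim]] := prime_prim_roots p_prime zeta_prim.
have S_exps s r := @mem_S_exponents k n N s r (n_dvd_N s).
apply: (frac_sum_eq0_of_roots a_lt_n n_dvd_N w_prim S_exps rs_uniq) => //.
  by rewrite size_map size_rs -ltnS prednK ?prime_gt0.
move=> z /rs_prim z_prim; split; first exact: prim_expN_neq1.
by apply: (frac_sum_conj_prim_root a_lt_n n_dvd_N _ _ zeta_prim z_prim frac0);
  apply: prim_expN_neq1.
Qed.
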